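(* Let $R$ be an associative ring with unity and let $\mathbf{K}=(K,\leq_p)$ be an AEC with $K$ a class of left $R$-modules closed under direct sums, pure submodules and pure epimorphic images. If $M_1,M_2,N\in K$ with $M_1,M_2\leq_p N$, then there are $M_1',M_0\in K$ such that $M_0\leq_p M_1'\leq_p N$, $M_0\leq_p M_2$, $M_1\leq_p M_1'$, $\|M_0\|\leq\|M_1\|+|R|+\aleph_0$, and $M_1'\mathop{\perp}^{N}_{M_0}M_2$.
   Context: $\leq_p$ is the pure submodule relation; a pure epimorphism is a surjective homomorphism with pure kernel. An AEC $(K,\leq_p)$: closed under isomorphism and unions of $\leq_p$-chains, with a Löwenheim–Skolem number. For $M_0,M_1',M_2,N\in K$ with $M_0\leq_p M_1',M_2\leq_p N$, write $M_1'\mathop{\perp}^N_{M_0}M_2$ if the homomorphism $t:(M_1'\oplus M_2)/\{(m,-m):m\in M_0\}\to N$, $t([(a,b)])=a+b$ (the canonical map from the pushout in $R$-Mod of the inclusions $M_0\hookrightarrow M_1'$, $M_0\hookrightarrow M_2$ to $N$), is a pure embedding (injective with pure image). *)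

(* R : pzRingType (associative ring with 1, possibly the zero ring),
   left R-modules are lmodType R. *)
From HB Require Import structures.
From mathcomp Require Import all_boot all_algebra.
From Stdlib Require List.
Set Implicit Arguments. Unset Strict Implicit. Unset Printing Implicit Defensive.
Import GRing.Theory.
Local Open Scope ring_scope.

Section Defs.
Variable R : pzRingType.

Definition is_linear (M N : lmodType R) (f : M -> N) : Prop :=
  forall (a : R) (x y : M), f (a *: x + y) = a *: f x + f y.

Definition is_submod (M : lmodType R) (S : M -> Prop) : Prop :=
  S 0 /\ (forall (a : R) (x y : M), S x -> S y -> S (a *: x + y)).

Definition pure_in (M : lmodType R) (S T : M -> Prop) : Prop :=
  (forall x, S x -> T x) /\
  forall (m n : nat) (A : 'I_m -> 'I_n -> R) (b : 'I_m -> M),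
    (forall i, S (b i)) ->
    (exists x : 'I_n -> M, (forall j, T (x j)) /\
        forall i, \sum_(j < n) A i j *: x j = b i) ->
    exists x : 'I_n -> M, (forall j, S (x j)) /\
        forall i, \sum_(j < n) A i j *: x j = b i.

Definition pure_sub (M : lmodType R) (S : M -> Prop) : Prop :=
  is_submod S /\ pure_in S (fun _ => True).

Definition K_sub (K : lmodType R -> Prop) (N : lmodType R) (S : N -> Prop) : Prop :=
  exists (M : lmodType R) (f : M -> N),
    is_linear f /\ injective f /\ K M /\ forall y, S y <-> exists x, f x = y.

Definition is_AEC (K : lmodType R -> Prop) : Prop :=
  (forall (M N : lmodType R) (f : M -> N),
      is_linear f -> bijective f -> K M -> K N) /\
  (* Tarski-Vaught chain axiom: a module that is the union of a
     chain of pure submodules belonging to K belongs to K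
     (pure-ness of chain members in each other / in the union and the
     coherence axiom hold automatically for <=_p) *)
  (forall (N : lmodType R) (I : Type) (S : I -> N -> Prop),
      (forall i, pure_sub (S i) /\ K_sub K (S i)) ->
      (forall i j, (forall x, S i x -> S j x) \/ (forall x, S j x -> S i x)) ->
      (forall x : N, exists i, S i x) ->
      K N) /\
  (* Loewenheim-Skolem number: a cardinal L >= |R| + aleph_0 *)
  (exists L : Type, (exists g : (R + nat)%type -> L, injective g) /\
      forall N : lmodType R, K N -> forall A : N -> Prop,
        exists S : N -> Prop, pure_sub S /\ K_sub K S /\
          (forall x, A x -> S x) /\
          exists h : {x | S x} -> ({x | A x} + L)%type, injective h).

Definition internal_dsum (N : lmodType R) (I : Type) (S : I -> N -> Prop) : Prop :=
  (forall x : N, exists (s : seq I) (v : I -> N),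
      (forall i, S i (v i)) /\ x = \sum_(i <- s) v i) /\
  (forall (s : seq I) (v : I -> N), List.NoDup s -> (forall i, S i (v i)) ->
      \sum_(i <- s) v i = 0 -> forall i, List.In i s -> v i = 0).

Definition closed_dsum (K : lmodType R -> Prop) : Prop :=
  forall (N : lmodType R) (I : Type) (S : I -> N -> Prop),
    (forall i, is_submod (S i) /\ K_sub K (S i)) -> internal_dsum S -> K N.

Definition closed_puresub (K : lmodType R -> Prop) : Prop :=
  forall (N : lmodType R) (S : N -> Prop), K N -> pure_sub S -> K_sub K S.

Definition closed_pureepi (K : lmodType R -> Prop) : Prop :=
  forall (M N : lmodType R) (f : M -> N), is_linear f ->
    (forall y, exists x, f x = y) -> pure_sub (fun x => f x = 0) -> K M -> K N.

(* M1' ⊥^N_{M0} M2 : the canonical map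
   t : (M1' ⊕ M2)/{(m,-m) : m in M0} -> N, [(a,b)] |-> a + b
   is injective and has pure image (all inside N). *)
Definition indep (N : lmodType R) (M0 M1' M2 : N -> Prop) : Prop :=
  (forall a a' b b', M1' a -> M1' a' -> M2 b -> M2 b' ->
     a + b = a' + b' -> exists m, M0 m /\ a - a' = m /\ b - b' = - m) /\
  pure_in (fun y => exists a b, M1' a /\ M2 b /\ y = a + b) (fun _ => True).

End Defs.

(** Take for [M1'] the closure of [M1] under [R]-linear combinations and under
    choosing solutions of finite linear systems whose parameters are already in
    the closure, for three kinds of systems: those solvable in [N], those
    solvable inside [M2], and those solvable in [N] modulo [M2].  These make
    [M1'], [M0 := M1' ∩ M2] and [M1' + M2] pure in [N] respectively, and the
    independence [M1' ⊥_{M0} M2] holds because [a + b = a' + b'] forces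
    [a - a' = b' - b ∈ M1' ∩ M2].  Each element of [M1'] is the value of a finite
    term over [M1], [R] and [nat]; since an infinite set [X] satisfies
    [|X × X| = |X|] (Zorn's lemma), these terms are at most
    [|M1| + |R| + ℵ0] many.  Membership in [K] only uses closure under pure
    submodules. *)

From HB Require Import structures.
From mathcomp Require Import all_boot all_algebra.
From mathcomp Require Import boolp classical_sets.
Set Implicit Arguments. Unset Strict Implicit. Unset Printing Implicit Defensive.

Definition injects (T U : Type) : Prop := exists f : T -> U, injective f.

Definition injective_on (U V : Type) (D : U -> Prop) (f : U -> V) : Prop :=
  forall x y, D x -> D y -> f x = f y -> x = y.

Definition extends (U V : Type) (D : U -> Prop) (f : U -> V) (D' : U -> Prop) (f' : U -> V) : Prop :=
  (forall u, D u -> D' u) /\ (forall u, D u -> f u = f' u).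

Lemma injects_trans (A B C : Type) : injects A B -> injects B C -> injects A C.
Proof. by move=> [f finj] [g ginj]; exists (g \o f); apply: inj_comp. Qed.

Lemma injects_sub (T : Type) (S S' : T -> Prop) :
  (forall x, S x -> S' x) -> injects {x | S x} {x | S' x}.
Proof.
move=> SS'; exists (fun x => exist _ (sval x) (SS' _ (svalP x))).
by move=> [x ?] [y ?] [/= exy]; apply: eq_exist.
Qed.

Lemma injects_tree_seq (A : Type) : injects (GenTree.tree A) (seq (nat + A)).
Proof. by exists (@GenTree.encode A); apply: pcan_inj (GenTree.codeK A). Qed.

Lemma partial_map_zorn (U V : Type) (Q : (U -> Prop) -> (U -> V) -> Prop)
    (D0 : U -> Prop) (f0 : U -> V) :
  Q D0 f0 ->
  (forall (I : Type) (D : I -> U -> Prop) (f : I -> U -> V) (Du : U -> Prop) (fu : U -> V),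
      I -> (forall i, Q (D i) (f i)) ->
      (forall i j, exists k, (forall u, D i u -> D k u) /\ (forall u, D j u -> D k u)) ->
      (forall u, Du u <-> exists i, D i u) -> (forall i u, D i u -> fu u = f i u) ->
      Q Du fu) ->
  exists D f, Q D f /\ forall D' f', Q D' f' -> extends D f D' f' -> forall u, D' u -> D u.
Proof.
move=> Q0 Qunion.
pose T := {p : (U -> Prop) * (U -> V) | Q p.1 p.2}.
pose ext (p q : T) := `[< extends (sval p).1 (sval p).2 (sval q).1 (sval q).2 >].
have ext_refl p : ext p p by apply/asboolP.
have ext_trans p q r : ext p q -> ext q r -> ext p r.
  move=> /asboolP[pq1 pq2] /asboolP[qr1 qr2]; apply/asboolP.
  by split=> u Du; [apply/qr1/pq1 | rewrite pq2 // qr2 //; apply: pq1].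
have [|t tmax] := ZL_preorder (exist _ (D0, f0) Q0) ext_refl ext_trans.
  move=> C Ctot; have [[p0 Cp0]|C0] := pselect (exists p, C p); last first.
    by exists (exist _ (D0, f0) Q0) => p Cp; case: C0; exists p.
  pose I := {p : T | C p}.
  pose D (i : I) := (sval (sval i)).1; pose f (i : I) := (sval (sval i)).2.
  have tot (i j : I) : extends (D i) (f i) (D j) (f j) \/ extends (D j) (f j) (D i) (f i).
    by case: (Ctot _ _ (svalP i) (svalP j)) => /asboolP; tauto.
  pose fu u := if pselect (exists i, D i u) is left ex then f (sval (cid ex)) u else f0 u.
  have fuE i u : D i u -> fu u = f i u.
    rewrite /fu; case: pselect => [ex|]; last by move=> nex Diu; case: nex; exists i.
    case: (cid ex) => j /= Dju Diu.
    by case: (tot i j) => -[_ ->].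
  have dir i j : exists k, (forall u, D i u -> D k u) /\ (forall u, D j u -> D k u).
    by case: (tot i j) => -[ij _]; [exists j | exists i].
  have Qu := Qunion I D f (fun u => exists i, D i u) fu (exist _ p0 Cp0)
    (fun i => svalP (sval i)) dir (fun u => iff_refl _) fuE.
  exists (exist _ (fun u => exists i, D i u, fu) Qu) => p Cp; apply/asboolP.
  by split=> u Du; [exists (exist _ p Cp) | symmetry; apply: (fuE (exist _ p Cp))].
exists (sval t).1, (sval t).2; split; first exact: svalP t.
move=> D' f' Q' ext'; have /tmax/asboolP[] : ext t (exist _ (D', f') Q') by apply/asboolP.
by [].
Qed.

Lemma partial_injection_comparable (X : Type) (S T : X -> Prop) :
  (exists g : X -> X, (forall x, S x -> T (g x)) /\ injective_on S g) \/
  (exists h : X -> X, (forall y, T y -> S (h y)) /\ injective_on T h).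
Proof.
pose Q (D : X -> Prop) (g : X -> X) :=
  [/\ forall x, D x -> S x, forall x, D x -> T (g x) & injective_on D g].
have [||D [g [[DS gT ginj] gmax]]] := @partial_map_zorn X X Q (fun _ => False) id.
- by split.
- move=> I D f Du fu _ Qi dir Duiff fuE; split.
  + by move=> x /Duiff[i /[dup] Dix]; case: (Qi i) => + _ _ => /[apply].
  + by move=> x /Duiff[i Dix]; rewrite (fuE i) //; case: (Qi i) => _ + _; apply.
  move=> x y /Duiff[i Dix] /Duiff[j Djy].
  have [k [ik jk]] := dir i j; rewrite (fuE k x) ?(fuE k y); auto.
  by case: (Qi k) => _ _; apply; auto.
have [SD|/existsNP[x0 /not_implyP[Sx0 nDx0]]] := pselect (forall x, S x -> D x).
  by left; exists g; split=> [x /SD/gT//|x y Sx Sy]; exact: ginj (SD _ Sx) (SD _ Sy).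
right.
have onto y : T y -> exists x, D x /\ g x = y.
  move=> Ty; apply: contrapT => noy.
  pose D' x := D x \/ x = x0.
  pose g' x := if pselect (x = x0) is left _ then y else g x.
  have gg' x : D x -> g x = g' x.
    by rewrite /g'; case: pselect => // -> /nDx0.
  have : Q D' g'.
    split; first by move=> x [/DS|->].
    + by move=> x; rewrite /g'; case: pselect => [_ _|nx [/gT|]].
    move=> x1 x2 D'x1 D'x2; rewrite /g'.
    case: pselect => [->|nx1]; case: pselect => [->|nx2] //.
    * by case: D'x2 => // Dx2 gx2; case: noy; exists x2.
    * by case: D'x1 => // Dx1 gx1; case: noy; exists x1.
    by case: D'x1 => // Dx1; case: D'x2 => // Dx2; apply: ginj.
  have ext : extends D g D' g' by split=> x Dx; [left | apply: gg'].
  by move=> /gmax/(_ ext x0 (or_intror erefl))/nDx0.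
pose h y := if pselect (exists x, D x /\ g x = y) is left ex then sval (cid ex) else y.
have hP y : T y -> D (h y) /\ g (h y) = y.
  by move=> /onto ex; rewrite /h; case: pselect => // ex'; case: (cid ex').
exists h; split=> [y /hP[/DS]//|y1 y2 /hP[_ e1] /hP[_ e2] e].
by rewrite -e1 -e2 e.
Qed.

Section InfiniteType.
Variables (X : Type) (iota : nat -> X).
Hypothesis iota_inj : injective iota.

(* [D] is the square [B × B] of its diagonal [B := fun x => D (x, x)], and [f]
   maps it injectively into [B]. *)
Definition square_pairing (D : X * X -> Prop) (f : X * X -> X) : Prop :=
  [/\ forall x y, D (x, y) <-> D (x, x) /\ D (y, y),
      forall n, D (iota n, iota n),
      forall p, D p -> D (f p, f p)
    & injective_on D f].

Lemma square_pairing_nat :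
  square_pairing (fun p => (exists n, p.1 = iota n) /\ (exists n, p.2 = iota n))
    (fun p => if pselect (exists nm : nat * nat, p = (iota nm.1, iota nm.2)) is left ex
              then iota (pickle (sval (cid ex))) else p.1).
Proof.
split=> /=.
- by move=> x y; split=> [[? ?]|[[? _] [? _]]].
- by move=> n; split; exists n.
- move=> [x y] /= [[n ->] [m ->]]; case: pselect => [ex|[]]; last by exists (n, m).
  by split; eexists.
move=> [x y] [x' y'] /= [[n ->] [m ->]] [[n' ->] [m' ->]].
case: pselect => [ex|[]]; last by exists (n, m).
case: pselect => [ex'|[]]; last by exists (n', m').
case: (cid ex) (cid ex') => [nm e] [nm' e'] /= /iota_inj /(pcan_inj pickleK) enm.
by rewrite e e' enm.
Qed.

Lemma square_pairing_directed_union (I : Type) (D : I -> X * X -> Prop) (f : I -> X * X -> X)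
    (Du : X * X -> Prop) (fu : X * X -> X) :
  I -> (forall i, square_pairing (D i) (f i)) ->
  (forall i j, exists k, (forall p, D i p -> D k p) /\ (forall p, D j p -> D k p)) ->
  (forall p, Du p <-> exists i, D i p) -> (forall i p, D i p -> fu p = f i p) ->
  square_pairing Du fu.
Proof.
move=> i0 sq dir Duiff fuE.
have Dsq i x y : D i (x, y) <-> D i (x, x) /\ D i (y, y) by case: (sq i).
split.
- move=> x y; rewrite !Duiff; split=> [[i /Dsq[Dx Dy]]|[[i Dx] [j Dy]]].
    by split; exists i.
  have [k [ik jk]] := dir i j; exists k; apply/Dsq; split; auto.
- by move=> n; apply/Duiff; exists i0; case: (sq i0).
- move=> p /Duiff[i Dip]; rewrite (fuE i) //; apply/Duiff; exists i.
  by case: (sq i) => _ _ + _; apply.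
move=> p q /Duiff[i Dip] /Duiff[j Djq].
have [k [ik jk]] := dir i j; rewrite (fuE k p) ?(fuE k q); auto.
by case: (sq k) => _ _ _; apply; auto.
Qed.

Lemma maximal_square_pairing : exists D f, square_pairing D f /\
  forall D' f', square_pairing D' f' -> extends D f D' f' -> forall p, D' p -> D p.
Proof.
exact: partial_map_zorn square_pairing_nat square_pairing_directed_union.
Qed.

Section SquarePairing.
Variables (D : X * X -> Prop) (f : X * X -> X).
Hypothesis sqDf : square_pairing D f.
Let B x := D (x, x).

(* [B ⊎ C ↪ B × {0, 1} ↪ B] *)
Lemma square_pairing_absorbs (C : X -> Prop) (k : X -> X) :
  (forall x, C x -> B (k x)) -> injective_on C k ->
  exists e : X -> X, (forall x, B x \/ C x -> B (e x)) /\ injective_on (fun x => B x \/ C x) e.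
Proof.
case: sqDf => Dsq Dnat Df finj kB kinj.
pose e x := if pselect (B x) then f (x, iota 0) else f (k x, iota 1).
have Dpair x y : B x -> B y -> D (x, y) by move=> Bx By; apply/Dsq.
exists e; split=> [x BCx|x y BCx BCy]; rewrite /e.
  by case: pselect => [Bx|nBx]; apply: Df; apply: Dpair => //; case: BCx => // /kB.
case: pselect => [Bx|nBx]; case: pselect => [By|nBy] /finj.
- by move=> /(_ (Dpair _ _ Bx (Dnat 0)) (Dpair _ _ By (Dnat 0))) [].
- have Cy : C y by case: BCy.
  by move=> /(_ (Dpair _ _ Bx (Dnat 0)) (Dpair _ _ (kB _ Cy) (Dnat 1))) [_ /iota_inj].
- have Cx : C x by case: BCx.
  by move=> /(_ (Dpair _ _ (kB _ Cx) (Dnat 1)) (Dpair _ _ By (Dnat 0))) [_ /iota_inj].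
have [Cx Cy] : C x /\ C y by case: BCx; case: BCy.
by move=> /(_ (Dpair _ _ (kB _ Cx) (Dnat 1)) (Dpair _ _ (kB _ Cy) (Dnat 1))) [/kinj]; apply.
Qed.

Lemma square_pairing_extend (C : X -> Prop) (h k : X -> X) :
  (forall x, B x -> C (h x)) -> injective_on B h -> (forall y, C y -> ~ B y) ->
  (forall y, C y -> B (k y)) -> injective_on C k ->
  exists D' f', [/\ square_pairing D' f', extends D f D' f' & forall y, C y -> D' (y, y)].
Proof.
move=> hC hinj CnB kB kinj.
have [e [eB einj]] := square_pairing_absorbs kB kinj.
case: sqDf => Dsq Dnat Df finj.
pose D' p := (B p.1 \/ C p.1) /\ (B p.2 \/ C p.2).
(* new pairs land in [C], away from the old values in [B] *)
pose f' p := if pselect (D p) then f p else h (f (e p.1, e p.2)).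
have De p : D' p -> D (e p.1, e p.2) by case=> /eB Be1 /eB Be2; apply/Dsq.
exists D', f'; split=> [||y Cy]; last by split; right.
  split=> [x y|n|p D'p|p q D'p D'q]; rewrite /D' /=.
  - by split; [case | case=> -[] ? _ [] ? _].
  - by split; left.
  - rewrite /f'; case: pselect => [Dp|nDp]; first by split; left; apply: Df.
    by split; right; apply/hC/Df/De.
  rewrite /f'; case: pselect => [Dp|nDp]; case: pselect => [Dq|nDq] /=.
  - exact: finj.
  - by move=> efp; case: (CnB (h (f (e q.1, e q.2)))); [apply/hC/Df/De | rewrite -efp; apply: Df].
  - by move=> efq; case: (CnB (h (f (e p.1, e p.2)))); [apply/hC/Df/De | rewrite efq; apply: Df].
  move=> /(hinj _ _ (Df _ (De _ D'p)) (Df _ (De _ D'q))) /(finj _ _ (De _ D'p) (De _ D'q)).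
  case: p q D'p D'q {nDp nDq} => [x y] [x' y'] /= [BCx BCy] [BCx' BCy'] [ex ey].
  by move: (einj _ _ BCx BCx' ex) (einj _ _ BCy BCy' ey) => /= -> ->.
split=> [[x y] /Dsq[Bx By]|p Dp]; first by split; left.
by rewrite /f'; case: pselect => //= /(_ Dp).
Qed.

Hypothesis Dmax :
  forall D' f', square_pairing D' f' -> extends D f D' f' -> forall p, D' p -> D p.

Lemma maximal_square_pairing_dominates (h : X -> X) :
  (forall x, B x -> ~ B (h x)) -> injective_on B h -> False.
Proof.
move=> hB hinj.
pose C y := exists x, B x /\ h x = y.
pose k y := if pselect (C y) is left ex then sval (cid ex) else y.
have kP y : C y -> B (k y) /\ h (k y) = y.
  by rewrite /k; case: pselect => // ex _; case: (cid ex).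
have kinj : injective_on C k.
  by move=> y1 y2 /kP[_ e1] /kP[_ e2] e; rewrite -e1 -e2 e.
have hC x : B x -> C (h x) by exists x.
have CnB y : C y -> ~ B y by move=> [x [Bx <-]]; apply: hB.
have [D' [f' [sq' ext CD']]] :=
  square_pairing_extend hC hinj CnB (fun y Cy => (kP y Cy).1) kinj.
have B0 : B (iota 0) by case: sqDf => _ + _ _; apply.
by apply: (hB _ B0); apply: (Dmax sq' ext); apply/CD'/hC.
Qed.

End SquarePairing.

Theorem infinite_square : injects (X * X) X.
Proof.
have [D [f [sqDf Dmax]]] := maximal_square_pairing.
pose B x := D (x, x).
(* either [~ B] injects into [B], and then so does [X], or [B] injects into
   [~ B], which maximality forbids *)
have [[g [gB ginj]]|[h [hnB hinj]]] := partial_injection_comparable (fun x => ~ B x) B;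
  last by case: (maximal_square_pairing_dominates sqDf Dmax hnB hinj).
have [e [eB einj]] := square_pairing_absorbs sqDf gB ginj.
have BnB x : B x \/ ~ B x by apply: EM.
have [Dsq _ _ finj] := sqDf.
have De p : D (e p.1, e p.2) by apply/Dsq; split; apply/eB/BnB.
exists (fun p => f (e p.1, e p.2)) => -[x y] [x' y'] /(finj _ _ (De _) (De _)) [].
by move=> /(einj _ _ (BnB x) (BnB x')) -> /(einj _ _ (BnB y) (BnB y')) ->.
Qed.

Lemma injects_sum (A B : Type) : injects A X -> injects B X -> injects (A + B) X.
Proof.
move=> [f finj] [g ginj]; have [pair pair_inj] := infinite_square.
exists (fun ab => match ab with inl a => pair (iota 0, f a) | inr b => pair (iota 1, g b) end).
move=> [a|b] [a'|b'] /pair_inj e; move: (congr1 fst e) (congr1 snd e) => /= /iota_inj //.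
  by move=> _ /finj ->.
by move=> _ /ginj ->.
Qed.

Lemma injects_seq (A : Type) : injects A X -> injects (seq A) X.
Proof.
move=> [f finj]; have [pair pair_inj] := infinite_square.
exists (foldr (fun a x => pair (iota 1, pair (f a, x))) (pair (iota 0, iota 0))).
elim=> [|a s IHs] [|a' s'] //= /pair_inj e;
  move: (congr1 fst e) (congr1 snd e) => /= /iota_inj // _ /pair_inj {}e.
by move: (congr1 fst e) (congr1 snd e) => /= /finj -> /IHs ->.
Qed.

Lemma injects_tree (A : Type) : injects A X -> injects (GenTree.tree A) X.
Proof.
move=> AX; apply: injects_trans (injects_tree_seq A) _.
by apply/injects_seq/injects_sum => //; exists iota.
Qed.

End InfiniteType.

Section FinitaryClosure.
Variables (T : Type) (t0 : T) (S : T -> Prop).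
Variables (Op : Type) (arity : Op -> nat) (op : forall o, ('I_(arity o) -> T) -> T).

Inductive closure : T -> Prop :=
  | closure_base x : S x -> closure x
  | closure_op o (a : 'I_(arity o) -> T) : (forall i, closure (a i)) -> closure (op a).

Fixpoint eval_tree (t : GenTree.tree ({x | S x} + Op)) : T :=
  match t with
  | GenTree.Leaf (inl x) => sval x
  | GenTree.Node _ (GenTree.Leaf (inr o) :: ts) =>
      op (fun i : 'I_(arity o) => nth t0 (map eval_tree ts) i)
  | _ => t0
  end.

Lemma closure_eval_tree x : closure x -> exists t, eval_tree t = x.
Proof.
elim=> [{}x Sx|o a _ IHa]; first by exists (GenTree.Leaf (inl (exist _ x Sx))).
have [ta taE] := choice IHa.
exists (GenTree.Node 0 (GenTree.Leaf (inr o) :: map ta (enum 'I_(arity o)))) => /=.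
congr op; apply: funext => i.
by rewrite -map_comp (nth_map i) ?size_enum_ord // nth_ord_enum /= taE.
Qed.

Lemma injects_closure : injects {x | closure x} (GenTree.tree ({x | S x} + Op)).
Proof.
pose code (x : {x | closure x}) := sval (cid (closure_eval_tree (svalP x))).
have codeK x : eval_tree (code x) = sval x by rewrite /code; case: cid.
exists code => x y /(congr1 eval_tree); rewrite !codeK.
by case: x y => x xc [y yc] /= exy; apply: eq_exist.
Qed.

End FinitaryClosure.

Import GRing.Theory.
Local Open Scope ring_scope.

Section Submodules.
Variables (R : pzRingType) (N : lmodType R).

Lemma submodB (S : N -> Prop) x y : is_submod S -> S x -> S y -> S (x - y).
Proof. by move=> [_ Slin] Sx Sy; have := Slin (-1) y x Sy Sx; rewrite scaleN1r addrC. Qed.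

Lemma submodI (S S' : N -> Prop) :
  is_submod S -> is_submod S' -> is_submod (fun x => S x /\ S' x).
Proof.
move=> [S0 Slin] [S'0 S'lin].
by split=> // a x y [Sx S'x] [Sy S'y]; split; [apply: Slin | apply: S'lin].
Qed.

Lemma pure_inW (S T : N -> Prop) :
  pure_in S (fun _ => True) -> (forall x, S x -> T x) -> pure_in S T.
Proof. by move=> [_ Spure] ST; split=> // m n A b Sb [x [_ Ax]]; apply: Spure => //; exists x. Qed.

Lemma sum_scalerD n (c : 'I_n -> R) (x y : 'I_n -> N) :
  \sum_(j < n) c j *: (x j + y j) = \sum_(j < n) c j *: x j + \sum_(j < n) c j *: y j.
Proof. by rewrite -big_split; apply: eq_bigr => j _; rewrite scalerDr. Qed.

Lemma sum_scalerB n (c : 'I_n -> R) (x y : 'I_n -> N) :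
  \sum_(j < n) c j *: (x j - y j) = \sum_(j < n) c j *: x j - \sum_(j < n) c j *: y j.
Proof. by rewrite -sumrB; apply: eq_bigr => j _; rewrite scalerBr. Qed.

End Submodules.

Section PureHull.
Variables (R : pzRingType) (N : lmodType R) (M1 M2 : N -> Prop).

Inductive system_kind := Exact | Within | Modulo.

Definition solves (k : system_kind) m n (A : 'I_m -> 'I_n -> R) (b : 'I_m -> N)
    (x : 'I_n -> N) : Prop :=
  match k with
  | Exact => forall i, \sum_(j < n) A i j *: x j = b i
  | Within => (forall j, M2 (x j)) /\ forall i, \sum_(j < n) A i j *: x j = b i
  | Modulo => forall i, M2 (\sum_(j < n) A i j *: x j - b i)
  end.

Record system := System {
  sys_kind : system_kind; sys_rows : nat; sys_cols : nat;
  sys_coef : 'I_sys_rows -> 'I_sys_cols -> R; sys_unknown : 'I_sys_cols }.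

Definition witness k m n (A : 'I_m -> 'I_n -> R) (b : 'I_m -> N) : 'I_n -> N :=
  if pselect (exists x, solves k A b x) is left ex then sval (cid ex) else fun=> 0.

Lemma witnessP k m n (A : 'I_m -> 'I_n -> R) b :
  (exists x, solves k A b x) -> solves k A b (witness k A b).
Proof. by rewrite /witness; case: pselect => // ex _; case: (cid ex). Qed.

Definition hull_arity (o : R + system) : nat := if o is inr s then sys_rows s else 2.

Definition hull_op (o : R + system) : ('I_(hull_arity o) -> N) -> N :=
  match o return ('I_(hull_arity o) -> N) -> N with
  | inl r => fun a => r *: a ord0 + a ord_max
  | inr s => fun b => witness (sys_kind s) (@sys_coef s) b (@sys_unknown s)
  end.

Definition hull := closure M1 hull_op.

Lemma hull_base x : M1 x -> hull x.
Proof. exact: closure_base. Qed.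

Lemma hull_lin r x y : hull x -> hull y -> hull (r *: x + y).
Proof.
move=> hx hy; pose a (i : 'I_2) := if val i is 0%N then x else y.
by apply: (@closure_op _ _ _ _ hull_op (inl r) a) => -[[|[|]]].
Qed.

Lemma hull_solution k m n (A : 'I_m -> 'I_n -> R) b :
  (forall i, hull (b i)) -> (exists x, solves k A b x) ->
  exists x, (forall j, hull (x j)) /\ solves k A b x.
Proof.
move=> hb /witnessP sol; exists (witness k A b); split=> // j.
exact: (@closure_op _ _ _ _ hull_op (inr (System k A j)) b).
Qed.

Definition kind_code (k : system_kind) : nat :=
  match k with Exact => 0 | Within => 1 | Modulo => 2 end.

Lemma injects_system : injects system (seq (nat + R)).
Proof.
exists (fun s => [:: inl (kind_code (sys_kind s)), inl (sys_rows s), inl (sys_cols s),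
                 inl (val (@sys_unknown s)) &
                 [seq inr (@sys_coef s ij.1 ij.2) | ij <- enum {: 'I_(sys_rows s) * 'I_(sys_cols s)}]]).
move=> [k m n A j] [k' m' n' A' j'] /= [ek em en]; subst m' n' => ej /eq_in_map eA.
have -> : k = k' by case: k k' ek => -[].
have -> : j = j' by apply: val_inj.
have -> // : A = A'.
by apply/funext => i; apply/funext => l; have [] := eA (i, l) (mem_enum _ _).
Qed.

Lemma injects_hull : injects {x | hull x} ({x | M1 x} + R + nat).
Proof.
have iota_inj : injective (@inr ({x | M1 x} + R) nat) by move=> ? ? [].
have RX : injects R ({x | M1 x} + R + nat) by exists (fun r => inl (inr r)) => ? ? [].
apply: injects_trans (injects_closure 0 M1 hull_op) _; apply: (injects_tree iota_inj).
apply: (injects_sum iota_inj); first by exists (fun x => inl (inl x)) => ? ? [].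
apply: (injects_sum iota_inj RX).
apply: (injects_trans injects_system); apply: (injects_seq iota_inj).
by apply: (injects_sum iota_inj) => //; exists inr.
Qed.

Lemma pure_hull : M1 0 -> pure_sub hull.
Proof.
move=> M10; split; first by split=> [|r x y]; [apply: hull_base | apply: hull_lin].
split=> // m n A b hb [x [_ Ax]].
by have [y [hy Ay]] := @hull_solution Exact _ _ A b hb (ex_intro _ x Ax); exists y.
Qed.

Hypothesis pureM2 : pure_sub M2.

Lemma pure_hull_meet : M1 0 -> pure_sub (fun y => hull y /\ M2 y).
Proof.
move=> M10; have [M2sub [_ M2pure]] := pureM2.
split; first by apply: submodI; [case: (pure_hull M10) | ].
split=> // m n A b hM2b [x [_ Ax]].
have [x' [M2x' Ax']] := M2pure m n A b (fun i => (hM2b i).2) (ex_intro _ x (conj (fun _ => I) Ax)).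
have [y [hy [M2y Ay]]] :=
  @hull_solution Within _ _ A b (fun i => (hM2b i).1) (ex_intro _ x' (conj M2x' Ax')).
by exists y; split.
Qed.

Lemma pure_hull_add : pure_in (fun y => exists a c, hull a /\ M2 c /\ y = a + c) (fun _ => True).
Proof.
split=> // m n A b Sb [x [_ Ax]].
have [M2sub [_ M2pure]] := pureM2.
have [a /choice[c acP]] := choice Sb.
have [ha M2c bE] : [/\ forall i, hull (a i), forall i, M2 (c i) & forall i, b i = a i + c i].
  by split=> i; case: (acP i) => [? []].
have [|y [hy Ay]] := @hull_solution Modulo _ _ A a ha.
  by exists x => i; rewrite Ax bE addrAC subrr add0r.
pose d i := b i - \sum_(j < n) A i j *: y j.
have M2d i : M2 (d i).
  have -> : d i = c i - (\sum_(j < n) A i j *: y j - a i) by rewrite /d bE opprB addrCA addrA.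
  by apply: submodB.
have [|z [M2z Az]] := M2pure m n A d M2d.
  by exists (fun j => x j - y j); split=> // i; rewrite sum_scalerB Ax.
exists (fun j => y j + z j); split; first by move=> j; exists (y j), (z j).
by move=> i; rewrite sum_scalerD Az /d addrC subrK.
Qed.

Lemma hull_indep : M1 0 -> indep (fun y => hull y /\ M2 y) hull M2.
Proof.
move=> M10; have [M2sub _] := pureM2; have [hsub _] := pure_hull M10.
split; last exact: pure_hull_add.
move=> a a' c c' ha ha' M2c M2c' e.
have e' : a - a' = c' - c.
  by apply/eqP; rewrite subr_eq [c' - c + a']addrAC [c' + a']addrC -e addrK.
exists (a - a'); split; last by rewrite e' opprB.
by split; [apply: submodB | rewrite e'; apply: submodB].
Qed.

End PureHull.

Theorem theorem4p9 (R : pzRingType) (K : lmodType R -> Prop)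
  (HAEC : is_AEC K) (Hdsum : closed_dsum K) (Hpsub : closed_puresub K)
  (Hpepi : closed_pureepi K)
  (N : lmodType R) (M1 M2 : N -> Prop)
  (HN : K N) (HK1 : K_sub K M1) (HK2 : K_sub K M2)
  (Hp1 : pure_sub M1) (Hp2 : pure_sub M2) :
  exists M1' M0 : N -> Prop,
    K_sub K M1' /\ K_sub K M0 /\
    is_submod M0 /\ pure_in M0 M1' /\ pure_sub M1' /\
    pure_in M0 M2 /\
    pure_in M1 M1' /\
    (exists h : {x | M0 x} -> ({x | M1 x} + R + nat)%type, injective h) /\
    indep M0 M1' M2.
Proof.
have [[M10 _] pureM1] := Hp1.
have pure_M1' := pure_hull M2 M10.
have [M0sub pure_M0] := pure_hull_meet Hp2 M10.
exists (hull M1 M2), (fun y => hull M1 M2 y /\ M2 y).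
split; first exact: Hpsub pure_M1'.
split; first exact: Hpsub (conj M0sub pure_M0).
split; first exact: M0sub.
split; first by apply: pure_inW pure_M0 _ => y [].
split; first exact: pure_M1'.
split; first by apply: pure_inW pure_M0 _ => y [].
split; first by apply: pure_inW pureM1 (@hull_base _ _ _ M2).
split; first by apply: injects_trans (injects_sub _) (injects_hull M1 M2) => y [].
exact: hull_indep.
Qed.
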